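(* Let $p_1,p_2\ge 5$ be distinct primes, $\mathbb{K}_1=\mathbb{Q}(\zeta_{p_1}+\zeta_{p_1}^{-1})$, $\mathbb{K}_2=\mathbb{Q}(\zeta_{p_2}+\zeta_{p_2}^{-1})$, $e_i=\zeta_{p_1}^i+\zeta_{p_1}^{-i}$, $b_j=\zeta_{p_2}^j+\zeta_{p_2}^{-j}$, $n_1=\frac{p_1-1}{2}$, $n_2=\frac{p_2-1}{2}$, $n=n_1n_2$. Let $\mathbb{K}=\mathbb{K}_1\mathbb{K}_2$ and let $\mathcal{I}\subseteq\mathcal{O}_{\mathbb{K}}$ be the $\mathbb{Z}$-module with $\mathbb{Z}$-basis $$\gamma_1=\{e_1b_1,\dots,e_1b_{n_2},\;e_2b_1,\dots,e_2b_{n_2},\;\dots,\;e_{n_1}b_1,\dots,e_{n_1}b_{n_2-1},\,2e_{n_1}b_{n_2}\},$$ i.e. all products $e_ib_j$ ($1\le i\le n_1$, $1\le j\le n_2$) except that $e_{n_1}b_{n_2}$ is replaced by $2e_{n_1}b_{n_2}$. Let $\alpha=(2-e_1)(2-b_1)$. Then $\frac{1}{\sqrt{p_1p_2}}\sigma_\alpha(\mathcal{I})\subseteq\mathbb{R}^n$ is a rotated $D_n$-lattice.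
   Context: $\zeta_m=e^{2\pi i/m}$. $\mathbb{K}$ is totally real Galois with Galois group $\{\sigma_1,\dots,\sigma_n\}$; $\sigma_\alpha(x)=(\sqrt{\sigma_1(\alpha)}\sigma_1(x),\dots,\sqrt{\sigma_n(\alpha)}\sigma_n(x))$. $D_n=\{(x_1,\dots,x_n)\in\mathbb{Z}^n:\sum x_i\text{ even}\}$; a rotated $D_n$-lattice is $R(D_n)$ for an orthogonal linear map $R$ of $\mathbb{R}^n$. *)

From HB Require Import structures.
From mathcomp Require Import all_boot all_order all_algebra.
From mathcomp Require Import reals trigo.
Set Implicit Arguments. Unset Strict Implicit. Unset Printing Implicit Defensive.
Import Order.TTheory GRing.Theory Num.Theory.
Local Open Scope ring_scope.

(* Image of  zeta_p^k + zeta_p^{-k}  under the real embedding zeta_p |-> zeta_p^a,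
   i.e. 2 cos(2 pi a k / p). *)
Definition cosemb {R : realType} (p a k : nat) : R :=
  2 * cos (2 * pi * (a * k)%:R / p%:R).

(* For n = n1 * n2, index m : 'I_n corresponds to the pair
   (m %/ n2 + 1, m %% n2 + 1) in {1..n1} x {1..n2}. *)
Definition idx1 (n2 m : nat) : nat := (m %/ n2).+1.
Definition idx2 (n2 m : nat) : nat := (m %% n2).+1.

(* The coordinates: embeddings sigma_l (l : 'I_n) of K = K1 K2,
   sigma_l(e_i) = 2cos(2 pi a_l i/p1), sigma_l(b_j) = 2cos(2 pi b_l j/p2),
   with (a_l, b_l) = (idx1 n2 l, idx2 n2 l). *)

Definition sig_alpha {R : realType} (p1 p2 n2 l : nat) : R :=
  (2 - cosemb p1 (idx1 n2 l) 1) * (2 - cosemb p2 (idx2 n2 l) 1).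

Definition sig_gamma {R : realType} (p1 p2 n n2 l k : nat) : R :=
  (if k == n.-1 then 2 else 1) *
  cosemb p1 (idx1 n2 l) (idx1 n2 k) * cosemb p2 (idx2 n2 l) (idx2 n2 k).

Definition lat_vec {R : realType} (p1 p2 n n2 : nat) (k : 'I_n) : 'rV[R]_n :=
  \row_(l < n) (Num.sqrt (sig_alpha p1 p2 n2 l) * sig_gamma p1 p2 n n2 l k
                / Num.sqrt (p1 * p2)%:R).

Definition in_lattice {R : realType} (p1 p2 n n2 : nat) (x : 'rV[R]_n) : Prop :=
  exists z : 'I_n -> int, x = \sum_(k < n) (z k)%:~R *: lat_vec p1 p2 n2 k.

Definition in_Dn {R : realType} (n : nat) (x : 'rV[R]_n) : Prop :=
  exists z : 'I_n -> int, (2 %| \sum_(k < n) z k)%Z /\ x = \row_(k < n) (z k)%:~R.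

Definition rotated_Dn {R : realType} (n : nat) (L : 'rV[R]_n -> Prop) : Prop :=
  exists Q : 'M[R]_n, Q *m Q^T = 1%:M /\
    forall x : 'rV[R]_n, L x <-> exists y, in_Dn y /\ x = y *m Q.

(* Write p = 2N + 1. The vectors q_j = (2/sqrt p) (sin ((2j+1) pi a / p))_(1 <= a <= N),
   0 <= j < N, are an orthonormal basis of R^N with q_N = 0, and the product-to-sum
   formula gives sqrt (2 - 2 cos (2 pi a/p)) * 2 cos (2 pi a i/p) / sqrt p = q_i(a) - q_(i-1)(a).
   Hence, in the orthonormal basis (q_i (x) q'_j) of R^n, the vector sigma_alpha(e_i b_j)
   / sqrt (p1 p2) has the integer coordinates (d_i - d_(i-1)) (x) (d_j - d_(j-1)), so the
   lattice is an orthogonal image of the integer lattice spanned by these vectors, the last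
   one doubled. That integer lattice is D_n: every generator has even coordinate sum, the
   last generator is 2 d_last, and telescoping sums of generators give every d_m - d_last. *)

From HB Require Import structures.
From mathcomp Require Import all_boot all_order all_algebra.
From mathcomp Require Import reals trigo.
From mathcomp Require Import ring zify.
Set Implicit Arguments. Unset Strict Implicit. Unset Printing Implicit Defensive.
Import Order.TTheory GRing.Theory Num.Theory.
Local Open Scope ring_scope.

Section Trigonometry.
Variable R : realType.
Implicit Types x y : R.

Lemma sin_natmulpi (k : nat) : sin (k%:R * pi) = 0 :> R.
Proof.
have := alternatingn (@sinDpi R) k 0; rewrite add0r sin0 mulr0 => <-.
by rewrite mulr_natl.
Qed.

Lemma sin_mul_cos x y : 2 * sin x * cos y = sin (y + x) - sin (y - x).
Proof. rewrite sinD sinB; ring. Qed.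

Lemma sin_mul_sin x y : 2 * sin x * sin y = cos (x - y) - cos (x + y).
Proof. rewrite cosB cosD; ring. Qed.

Lemma sin_mul_sum_cos x (N : nat) :
  2 * sin x * \sum_(a < N) cos (a.+1%:R * 2 * x) = sin (N.*2.+1%:R * x) - sin x.
Proof.
elim: N => [|N IHN]; first by rewrite big_ord0 mulr0 mul1r subrr.
rewrite big_ord_recr /= mulrDr IHN sin_mul_cos.
have -> : N.+1%:R * 2 * x + x = (N.+1).*2.+1%:R * x by rewrite -!mul2n; ring.
have -> : N.+1%:R * 2 * x - x = N.*2.+1%:R * x by rewrite -!mul2n; ring.
ring.
Qed.

Lemma sin_pi_ratio_gt0 (a p : nat) : (0 < a < p)%N -> 0 < sin (pi * a%:R / p%:R) :> R.
Proof.
move=> /andP[a_gt0 a_lt_p]; have p_gt0 : (0 : R) < p%:R by rewrite ltr0n; lia.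
apply: sin_gt0_pi; apply/andP; split.
  by rewrite divr_gt0 // mulr_gt0 ?pi_gt0 // ltr0n.
by rewrite ltr_pdivrMr // ltr_pM2l ?pi_gt0 // ltr_nat.
Qed.

(* The nontrivial p-th roots of unity sum to -1 and come in conjugate pairs. *)
Lemma sum_cos_multiples (p N m : nat) : p = N.*2.+1 -> (0 < m < p)%N ->
  \sum_(a < N) cos (2 * pi * (m * a.+1)%:R / p%:R) = - 2^-1 :> R.
Proof.
move=> pE /andP[m_gt0 m_lt_p].
have p_gt0 : (0 : R) < p%:R by rewrite ltr0n pE.
set x : R := pi * m%:R / p%:R.
have sinx_gt0 : 0 < sin x by apply: sin_pi_ratio_gt0; rewrite m_gt0.
have := sin_mul_sum_cos x N.
have -> : N.*2.+1%:R * x = m%:R * pi by rewrite /x -pE; field; rewrite gt_eqF.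
rewrite sin_natmulpi sub0r.
have -> : \sum_(a < N) cos (a.+1%:R * 2 * x) =
           \sum_(a < N) cos (2 * pi * (m * a.+1)%:R / p%:R).
  by apply: eq_bigr => a _; rewrite /x natrM; congr cos; field; rewrite gt_eqF.
have s2_neq0 : 2 * sin x != 0 by rewrite mulf_neq0 ?pnatr_eq0 ?gt_eqF.
by move=> sumE; apply: (mulfI s2_neq0); rewrite sumE; field.
Qed.
End Trigonometry.

Section SineBasis.
Variable R : realType.

Definition sine_vec (p j a : nat) : R :=
  2 / Num.sqrt p%:R * sin (j.*2.+1%:R * pi * a%:R / p%:R).

Lemma sine_vec_mul (p j j' a : nat) : (0 < p)%N -> (j' <= j)%N ->
  sine_vec p j a * sine_vec p j' a =
  2 / p%:R * (cos (2 * pi * ((j - j') * a)%:R / p%:R)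
              - cos (2 * pi * ((j + j').+1 * a)%:R / p%:R)).
Proof.
move=> p_gt0 le_j'j; have p_neq0 : (p%:R : R) != 0 by rewrite pnatr_eq0 -lt0n.
have sqrt_neq0 : Num.sqrt (p%:R : R) != 0 by rewrite sqrtr_eq0 -ltNge ltr0n.
rewrite /sine_vec.
set A := j.*2.+1%:R * pi * a%:R / p%:R; set B := j'.*2.+1%:R * pi * a%:R / p%:R.
have -> : 2 / Num.sqrt p%:R * sin A * (2 / Num.sqrt p%:R * sin B) =
          2 / Num.sqrt p%:R ^+ 2 * (2 * sin A * sin B) by field.
rewrite sqr_sqrtr ?ler0n // sin_mul_sin /A /B natrM; congr (_ * (cos _ - cos _)).
  by rewrite natrB // -!mul2n; field.
by rewrite -!mul2n; field.
Qed.

Lemma sine_vec_orthonormal (p N j j' : nat) : p = N.*2.+1 -> (j < N)%N -> (j' < N)%N ->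
  \sum_(a < N) sine_vec p j a.+1 * sine_vec p j' a.+1 = (j == j')%:R.
Proof.
move=> pE; wlog le_j'j : j j' / (j' <= j)%N.
  move=> wlog_le j_lt j'_lt; case: (leqP j' j) => [le|/ltnW le]; first exact: wlog_le.
  by rewrite eq_sym -wlog_le //; apply: eq_bigr => a _; rewrite mulrC.
move=> j_lt j'_lt; have p_neq0 : (p%:R : R) != 0 by rewrite pnatr_eq0 pE.
have p_gt0 : (0 < p)%N by rewrite pE.
under eq_bigr => a _ do rewrite sine_vec_mul //.
rewrite -mulr_sumr sumrB (@sum_cos_multiples R p N (j + j').+1) //; last by lia.
case: (eqVneq j j') => [<-|neq_jj'].
  under eq_bigr => a _ do rewrite subnn mul0n mulr0 mul0r cos0.
  have pR : (p%:R : R) = 2 * N%:R + 1 by rewrite pE -mul2n -natr1 natrM.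
  by rewrite sumr_const card_ord /= pR; field; rewrite -pR.
rewrite (@sum_cos_multiples R p N (j - j')) //; last by lia.
by rewrite /=; field.
Qed.

Lemma sine_vec_top (p N a : nat) : p = N.*2.+1 -> sine_vec p N a = 0.
Proof.
move=> pE; rewrite /sine_vec -pE.
have p_neq0 : (p%:R : R) != 0 by rewrite pnatr_eq0 pE.
by rewrite (_ : p%:R * pi * a%:R / p%:R = a%:R * pi) ?sin_natmulpi ?mulr0 //; field.
Qed.

Lemma cosemb_le2 (p a k : nat) : cosemb p a k <= 2 :> R.
Proof. by rewrite /cosemb -[X in _ <= X]mulr1 ler_pM2l ?cos_le1. Qed.

(* Since [2 - cosemb p a 1 = (2 sin (pi a / p))^2], the product-to-sum formula
   turns the twisted embedding of [e_(i+1)] into a difference of sine vectors. *)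
Lemma cosemb_sine_vec (p a i : nat) : (0 < a < p)%N ->
  Num.sqrt (2 - cosemb p a 1) * cosemb p a i.+1 / Num.sqrt p%:R =
  sine_vec p i.+1 a - sine_vec p i a :> R.
Proof.
move=> /[dup] a_range /andP[a_gt0 a_lt_p].
have p_neq0 : (p%:R : R) != 0 by rewrite pnatr_eq0; lia.
have sqrt_neq0 : Num.sqrt (p%:R : R) != 0 by rewrite sqrtr_eq0 -ltNge ltr0n; lia.
set t : R := pi * a%:R / p%:R.
have sint_gt0 : 0 < sin t by exact: sin_pi_ratio_gt0.
have -> : 2 - cosemb p a 1 = (2 * sin t) ^+ 2 :> R.
  rewrite /cosemb muln1 (_ : 2 * pi * a%:R / p%:R = t + t); last by rewrite /t; field.
  by rewrite cosD -!expr2 cos2sin2; ring.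
rewrite sqrtr_sqr gtr0_norm ?mulr_gt0 // /cosemb /sine_vec.
set y : R := 2 * pi * (a * i.+1)%:R / p%:R.
rewrite (_ : 2 * sin t * (2 * cos y) / Num.sqrt p%:R = 2 / Num.sqrt p%:R * (2 * sin t * cos y));
  last by field.
rewrite sin_mul_cos -mulrBr /y /t natrM -!mul2n; congr (_ * (sin _ - sin _)); by field.
Qed.
End SineBasis.

Section DivModIndex.
Variables (N1 N2 : nat).
Hypothesis N2_gt0 : (0 < N2)%N.

Lemma eqn_divmod (m m' : nat) :
  (m == m') = (m %/ N2 == m' %/ N2)%N && (m %% N2 == m' %% N2)%N.
Proof.
apply/eqP/andP => [->|[/eqP eq_div /eqP eq_mod]]; first by [].
by rewrite (divn_eq m N2) (divn_eq m' N2) eq_div eq_mod.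
Qed.

Lemma divn_ord_lt (m : 'I_(N1 * N2)) : (m %/ N2 < N1)%N.
Proof. by rewrite ltn_divLR. Qed.

Lemma sum_divmod (V : nmodType) (F : nat -> nat -> V) :
  \sum_(m < N1 * N2) F (m %/ N2)%N (m %% N2)%N = \sum_(a < N1) \sum_(b < N2) F a b.
Proof.
rewrite -(big_mkord xpredT (fun m => F (m %/ N2)%N (m %% N2)%N)).
elim: N1 => [|k IHk]; first by rewrite mul0n big_ord0 big_geq.
rewrite mulSnr (@big_cat_nat _ _ _ (k * N2)) ?leq_addr //= IHk big_ord_recr /=.
congr (_ + _); rewrite -[X in \sum_(X <= _ < _) _]add0n big_addn addKn big_mkord.
apply: eq_bigr => b _; have b_lt := ltn_ord b.
by rewrite divnDMl // divn_small // [(b + _)%N]addnC modnMDl modn_small.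
Qed.

Lemma sum_divmod_mul (V : pzSemiRingType) (f g : nat -> V) :
  \sum_(m < N1 * N2) f (m %/ N2)%N * g (m %% N2)%N =
  (\sum_(a < N1) f a) * (\sum_(b < N2) g b).
Proof. by rewrite (@sum_divmod _ (fun a b => f a * g b)) big_distrlr. Qed.

Hypothesis N1_gt0 : (0 < N1)%N.

Lemma divmod_pred_mul : ((N1 * N2).-1 %/ N2 = N1.-1)%N /\ ((N1 * N2).-1 %% N2 = N2.-1)%N.
Proof.
have -> : ((N1 * N2).-1 = N1.-1 * N2 + N2.-1)%N by case: N1 N1_gt0 => // k; nia.
by rewrite divnMDl // modnMDl divn_small ?modn_small ?addn0 //; lia.
Qed.

End DivModIndex.

Section DifferenceVectors.
Variable V : pzRingType.

Definition diff1 (i x : nat) : V := (x == i.+1)%:R - (x == i)%:R.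

Lemma sum_eqn_mul (N t : nat) (g : nat -> V) :
  \sum_(x < N) (x == t :> nat)%:R * g x = (t < N)%:R * g t.
Proof.
under eq_bigr => x _ do rewrite mulr_natl mulrb.
by rewrite -big_mkcond big_ord1_eq mulr_natl mulrb.
Qed.

Lemma sum_diff1_mul (N i : nat) (g : nat -> V) : (i < N)%N -> g N = 0 ->
  \sum_(x < N) diff1 i x * g x = g i.+1 - g i.
Proof.
move=> i_lt gN0; under eq_bigr => x _ do rewrite mulrBl.
rewrite sumrB !sum_eqn_mul i_lt mul1r.
rewrite leq_eqVlt in i_lt; case/orP: i_lt => [/eqP iN|->]; last by rewrite mul1r.
by rewrite iN ltnn gN0 mul0r.
Qed.

Lemma sum_diff1 (N i : nat) : (i < N)%N -> \sum_(x < N) diff1 i x = (i.+1 < N)%:R - 1.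
Proof.
move=> i_lt; have := @sum_diff1_mul N i (fun x => (x < N)%:R) i_lt.
rewrite /= ltnn i_lt => <- //; apply: eq_bigr => x _; by rewrite ltn_ord mulr1.
Qed.

Lemma diff1_pred (N x : nat) : (0 < N)%N -> (x < N)%N -> diff1 N.-1 x = - (x == N.-1)%:R.
Proof. by move=> N_gt0 x_lt; rewrite /diff1 prednK // ltn_eqF // sub0r. Qed.

Lemma sum_ge_diff1 (N a x : nat) : (a <= N)%N -> (x < N)%N ->
  \sum_(i < N) (a <= i)%:R * diff1 i x = - (x == a)%:R.
Proof.
move=> a_le x_lt; under eq_bigr => i _ do rewrite mulr_natl mulrb.
rewrite -big_mkcond.
have -> : \sum_(i < N | (a <= i)%N) diff1 i x = \sum_(a <= i < N) diff1 i x.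
  by rewrite big_geq_mkord.
by rewrite (telescope_sumr_eq (fun i => (x == i)%:R)) // ltn_eqF // sub0r.
Qed.
End DifferenceVectors.

Section GammaMatrix.
Variables (n1 n2 : nat).
Local Notation n := (n1 * n2)%N.

(* Row [k] lists the coordinates of the k-th element of the basis [gamma_1]
   (namely e_(i+1) b_(j+1) with (i, j) = (k %/ n2, k %% n2)) in the orthonormal
   basis of [sine_rotation] below; the last one is 2 e_n1 b_n2. *)
Definition gamma_mx {V : pzRingType} : 'M[V]_n :=
  \matrix_(k, m) ((if k == n.-1 :> nat then 2 else 1) *
                  diff1 V (k %/ n2) (m %/ n2) * diff1 V (k %% n2) (m %% n2)).

Lemma map_gamma_mx (V : pzRingType) : map_mx intr (gamma_mx : 'M[int]_n) = gamma_mx :> 'M[V]_n.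
Proof.
apply/matrixP => k m; rewrite !mxE /diff1 !rmorphM !rmorphB /= !rmorph_nat.
by case: ifP.
Qed.

Hypotheses (n1_gt0 : (0 < n1)%N) (n2_gt0 : (0 < n2)%N).

Lemma pred_mul_lt : (n.-1 < n)%N.
Proof. by rewrite ltn_predL muln_gt0 n1_gt0. Qed.

Definition last_ord : 'I_n := Ordinal pred_mul_lt.

Lemma gamma_mx_row_sum_even (k : 'I_n) : (2 %| \sum_m (gamma_mx : 'M[int]_n) k m)%Z.
Proof.
under eq_bigr => m _ do rewrite mxE -mulrA.
rewrite -mulr_sumr (sum_divmod_mul n1 n2_gt0 (diff1 _ (k %/ n2)) (diff1 _ (k %% n2))).
rewrite !sum_diff1 ?divn_ord_lt ?ltn_pmod //.
case: eqP => [_|k_neq_last]; first exact: dvdz_mulr.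
suff : ((k %/ n2).+1 < n1)%N || ((k %% n2).+1 < n2)%N.
  by case/orP => ->; rewrite subrr ?mulr0 ?mul0r.
apply: contra_notT k_neq_last; rewrite negb_or -!leqNgt => /andP[le1 le2].
have [div_last mod_last] := divmod_pred_mul n2_gt0 n1_gt0.
have := divn_ord_lt n2_gt0 k; have := ltn_pmod k n2_gt0.
move=> mod_lt div_lt; apply/eqP; rewrite (eqn_divmod n2) div_last mod_last.
by apply/andP; split; apply/eqP; lia.
Qed.

Lemma gamma_mx_last_coord (m : 'I_n) :
  diff1 int n1.-1 (m %/ n2) * diff1 int n2.-1 (m %% n2) = (m == n.-1 :> nat)%:R.
Proof.
have [div_last mod_last] := divmod_pred_mul n2_gt0 n1_gt0.
rewrite !diff1_pred ?divn_ord_lt ?ltn_pmod // mulrNN -natrM mulnb.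
by rewrite (eqn_divmod n2 m) div_last mod_last.
Qed.

Lemma gamma_mx_row_last : row last_ord (gamma_mx : 'M[int]_n) = 2 *: delta_mx 0 last_ord.
Proof.
apply/rowP => m; rewrite !mxE /=.
have [div_last mod_last] := divmod_pred_mul n2_gt0 n1_gt0.
by rewrite div_last mod_last -mulrA gamma_mx_last_coord eqxx.
Qed.

(* Summing the rows whose two indices dominate those of [m] telescopes to [e_m];
   the last row is left out because it is doubled. *)
Definition gamma_coef (m : 'I_n) : 'rV[int]_n :=
  \row_k [&& k != last_ord, m %/ n2 <= k %/ n2 & m %% n2 <= k %% n2]%N%:R.

Lemma gamma_coef_mul (m : 'I_n) :
  gamma_coef m *m gamma_mx = delta_mx 0 m - delta_mx 0 last_ord.
Proof.
apply/rowP => m'; rewrite !mxE.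
pose G (k : 'I_n) : int :=
  (m %/ n2 <= k %/ n2)%N%:R * diff1 int (k %/ n2) (m' %/ n2) *
  ((m %% n2 <= k %% n2)%N%:R * diff1 int (k %% n2) (m' %% n2)).
have sumG : \sum_k G k = (m' == m)%:R.
  rewrite (sum_divmod_mul n1 n2_gt0 (fun a => (m %/ n2 <= a)%N%:R * diff1 int a (m' %/ n2))
                                   (fun b => (m %% n2 <= b)%N%:R * diff1 int b (m' %% n2))).
  rewrite !sum_ge_diff1 ?ltn_pmod ?divn_ord_lt ?(ltnW (ltn_pmod _ _))
          ?(ltnW (divn_ord_lt _ _)) //.
  by rewrite mulrNN -natrM mulnb -(eqn_divmod n2).
rewrite (bigD1 last_ord) //= !mxE eqxx /= mul0r add0r.
have G_last : G last_ord = (m' == last_ord)%:R.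
  have [div_last mod_last] := divmod_pred_mul n2_gt0 n1_gt0.
  have le1 : (m %/ n2 <= n1.-1)%N by rewrite -ltnS prednK ?divn_ord_lt.
  have le2 : (m %% n2 <= n2.-1)%N by rewrite -ltnS prednK ?ltn_pmod.
  by rewrite /G /= div_last mod_last le1 le2 !mul1r gamma_mx_last_coord.
rewrite -sumG [\sum_k G k](bigD1 last_ord) // G_last /= addrC addKr.
apply: eq_bigr => k k_neq; have k_ne : (k == n.-1 :> nat) = false := negbTE k_neq.
by rewrite !mxE k_neq k_ne /= /G -mulnb natrM; ring.
Qed.

End GammaMatrix.

Lemma int_rowspan_even_sum (n : nat) (P : 'M[int]_n) (m0 : 'I_n) (c : 'I_n -> 'rV[int]_n) :
  (forall k, (2 %| \sum_m P k m)%Z) ->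
  (forall m, c m *m P = delta_mx 0 m - delta_mx 0 m0) ->
  row m0 P = 2 *: delta_mx 0 m0 ->
  forall x : 'rV[int]_n, (exists z, x = z *m P) <-> (2 %| \sum_m x 0 m)%Z.
Proof.
move=> P_even cP rowP0 x; split.
  case=> z ->; under eq_bigr => m _ do rewrite mxE.
  rewrite exchange_big /=; apply: rpred_sum => k _.
  by rewrite -mulr_sumr dvdz_mull.
set S := \sum_m x 0 m => S_even.
exists (\sum_m x 0 m *: c m + (S %/ 2)%Z *: delta_mx 0 m0).
rewrite mulmxDl -scalemxAl -rowE rowP0 scalerA divzK // mulmx_suml.
under eq_bigr => m _ do rewrite -scalemxAl cP scalerBr.
rewrite sumrB -scaler_suml subrK; exact: row_sum_delta.
Qed.

Lemma rotated_Dn_int_basis (R : realType) (n : nat) (v : 'I_n -> 'rV[R]_n)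
    (P : 'M[int]_n) (Q : 'M[R]_n) :
  Q *m Q^T = 1%:M ->
  (forall k, v k = row k (map_mx intr P) *m Q) ->
  (forall x : 'rV[int]_n, (exists z, x = z *m P) <-> (2 %| \sum_m x 0 m)%Z) ->
  rotated_Dn (fun x => exists z : 'I_n -> int, x = \sum_(k < n) (z k)%:~R *: v k).
Proof.
move=> QQt vE spanE; exists Q; split => // x.
have combE (z : 'rV[int]_n) :
    \sum_k (z 0 k)%:~R *: v k = map_mx intr (z *m P) *m Q.
  rewrite map_mxM (mulmx_sum_row (map_mx intr z)) mulmx_suml; apply: eq_bigr => k _.
  by rewrite vE scalemxAl mxE.
split.
- case=> z ->; exists (map_mx intr (\row_k z k *m P)); split.
    exists (fun m => (\row_k z k *m P) 0 m); split; first by apply/spanE; exists (\row_k z k).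
    by apply/rowP => m; rewrite !mxE.
  by rewrite -combE; apply: eq_bigr => k _; rewrite mxE.
- case=> y [[w [w_even ->]] ->].
  have [|z wE] := (spanE (\row_m w m)).2; first by under eq_bigr do rewrite mxE.
  exists (fun k => z 0 k); rewrite combE -wE; congr (_ *m _).
  by apply/rowP => m; rewrite !mxE.
Qed.

Section SineRotation.
Variables (R : realType) (p1 p2 n1 n2 : nat).
Hypotheses (p1E : p1 = n1.*2.+1) (p2E : p2 = n2.*2.+1) (n2_gt0 : (0 < n2)%N).
Local Notation n := (n1 * n2)%N.

Definition sine_rotation : 'M[R]_n :=
  \matrix_(m, l) (sine_vec R p1 (m %/ n2) (idx1 n2 l) * sine_vec R p2 (m %% n2) (idx2 n2 l)).

Lemma sine_rotation_orthogonal : sine_rotation *m sine_rotation^T = 1%:M.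
Proof.
apply/matrixP => m m'; rewrite !mxE.
under eq_bigr => l _ do rewrite !mxE /idx1 /idx2 mulrACA.
rewrite (sum_divmod_mul n1 n2_gt0
  (fun a => sine_vec R p1 (m %/ n2) a.+1 * sine_vec R p1 (m' %/ n2) a.+1)
  (fun b => sine_vec R p2 (m %% n2) b.+1 * sine_vec R p2 (m' %% n2) b.+1)).
rewrite (sine_vec_orthonormal _ p1E) ?divn_ord_lt // (sine_vec_orthonormal _ p2E) ?ltn_pmod //.
by rewrite -natrM mulnb -(eqn_divmod n2).
Qed.

Lemma lat_vec_sine_rotation (k : 'I_n) :
  lat_vec p1 p2 n2 k = row k (gamma_mx n1 n2) *m sine_rotation.
Proof.
apply/rowP => l; rewrite !mxE.
set w : R := if k == n.-1 :> nat then 2 else 1.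
set a := idx1 n2 l; set b := idx2 n2 l.
have a_range : (0 < a < p1)%N.
  by move: (divn_ord_lt n2_gt0 l); rewrite /a /idx1 p1E -addnn; move: (l %/ n2)%N; lia.
have b_range : (0 < b < p2)%N.
  by move: (ltn_pmod l n2_gt0); rewrite /b /idx2 p2E -addnn; move: (l %% n2)%N; lia.
have sqrt_p_neq0 (p : nat) : (0 < p)%N -> Num.sqrt (p%:R : R) != 0.
  by move=> p_gt0; rewrite sqrtr_eq0 -ltNge ltr0n.
transitivity (w *
  (Num.sqrt (2 - cosemb p1 a 1) * cosemb p1 a (k %/ n2).+1 / Num.sqrt p1%:R) *
  (Num.sqrt (2 - cosemb p2 b 1) * cosemb p2 b (k %% n2).+1 / Num.sqrt p2%:R)).
  rewrite /sig_alpha /sig_gamma -/a -/b natrM !sqrtrM ?ler0n ?subr_ge0 ?cosemb_le2 //.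
  by rewrite /w; field; rewrite !sqrt_p_neq0 ?p1E ?p2E.
rewrite !cosemb_sine_vec //.
rewrite (eq_bigr (fun m : 'I_n => w *
    (diff1 R (k %/ n2) (m %/ n2) * sine_vec R p1 (m %/ n2) a *
     (diff1 R (k %% n2) (m %% n2) * sine_vec R p2 (m %% n2) b)))); last first.
  by move=> m _; rewrite !mxE mulrACA -!mulrA.
rewrite -mulr_sumr (sum_divmod_mul n1 n2_gt0
  (fun x => diff1 R (k %/ n2) x * sine_vec R p1 x a)
  (fun y => diff1 R (k %% n2) y * sine_vec R p2 y b)).
rewrite (@sum_diff1_mul _ n1 (k %/ n2) (fun x => sine_vec R p1 x a)) ?divn_ord_lt //=;
  last exact: sine_vec_top.
rewrite (@sum_diff1_mul _ n2 (k %% n2) (fun y => sine_vec R p2 y b)) ?ltn_pmod //=;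
  last exact: sine_vec_top.
by rewrite mulrA.
Qed.
End SineRotation.

Lemma prime_ge5_half (p : nat) : prime p -> (5 <= p)%N ->
  p = ((p.-1)./2).*2.+1 /\ (0 < (p.-1)./2)%N.
Proof.
move=> p_prime p_ge5; have [p_eq2|p_odd] := even_prime p_prime; first by rewrite p_eq2 in p_ge5.
have := odd_double_half p.-1.
have -> : odd p.-1 = false by move: p_odd; case: p {p_prime p_ge5} => //= p /negbTE.
rewrite add0n => halfE; split; first by rewrite halfE prednK // (leq_trans _ p_ge5).
by rewrite -(leq_double 1) halfE; lia.
Qed.

Theorem proposition3p7 (R : realType) (p1 p2 : nat) :
  prime p1 -> prime p2 -> (5 <= p1)%N -> (5 <= p2)%N -> p1 != p2 ->
  let n1 := (p1.-1)./2 in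
  let n2 := (p2.-1)./2 in
  let n := (n1 * n2)%N in
  rotated_Dn (@in_lattice R p1 p2 n n2).
Proof.
(* [p1 != p2] only ensures that the pairs (a, b) are the distinct embeddings
   of K; [lat_vec] is already written in these coordinates. *)
move=> p1_prime p2_prime p1_ge5 p2_ge5 _ n1 n2 n.
have [p1E n1_gt0] := prime_ge5_half p1_prime p1_ge5.
have [p2E n2_gt0] := prime_ge5_half p2_prime p2_ge5.
rewrite -/n1 in p1E n1_gt0; rewrite -/n2 in p2E n2_gt0.
apply: (@rotated_Dn_int_basis R n _ (gamma_mx n1 n2) (sine_rotation R p1 p2 n1 n2)).
- exact: sine_rotation_orthogonal.
- by move=> k; rewrite map_gamma_mx; exact: lat_vec_sine_rotation.
- exact: int_rowspan_even_sum (gamma_mx_row_sum_even n1_gt0 n2_gt0)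
    (gamma_coef_mul n1_gt0 n2_gt0) (gamma_mx_row_last n1_gt0 n2_gt0).
Qed.
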